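(* For all integers $\ell\ge 2$, $k\ge 1$, $n\ge 1$: (a) $f_\ell(n,k)\le \frac{n}{k}\,f_{\ell-1}(n,k)$; (b) if $\ell$ is even, then $f_\ell(n,k)\le 1+k\ell\,(f_{\ell-1}(n,k)-1)\le k\ell\, f_{\ell-1}(n,k)$.
   Context: $f_\ell(n,k)$ is the maximum size of a family $\mathcal S$ of subsets of $A_1\cup\dots\cup A_\ell$, where $A_1,\dots,A_\ell$ are pairwise disjoint $n$-element sets, with $|S\cap A_i|=k$ for all $S\in\mathcal S$ and all $i$, such that for distinct $S,T\in\mathcal S$ the number of indices $i$ with $S\cap T\cap A_i=\emptyset$ is odd. (Equivalently, the clique number of the $\ell$-th xor-power of the Kneser graph $KG(n,k)$.) *)

From HB Require Import structures.
From mathcomp Require Import all_boot all_order all_algebra.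
Set Implicit Arguments. Unset Strict Implicit. Unset Printing Implicit Defensive.

(* Ground set: A_1 ∪ ... ∪ A_l realised as 'I_l * 'I_n, with
   A_i = {i} x 'I_n (pairwise disjoint, each of size n). *)
Definition block (l n : nat) (i : 'I_l) : {set 'I_l * 'I_n} :=
  [set x | x.1 == i].

Definition balanced (l n k : nat) (S : {set 'I_l * 'I_n}) : bool :=
  [forall i : 'I_l, #|S :&: block n i| == k].

Definition ndisj (l n : nat) (S T : {set 'I_l * 'I_n}) : nat :=
  #|[set i : 'I_l | S :&: T :&: block n i == set0]|.

Definition good_family (l n k : nat) (F : {set {set 'I_l * 'I_n}}) : bool :=
  [forall S in F, balanced k S] &&
  [forall S in F, forall T in F, (S != T) ==> odd (ndisj S T)].

Definition f (l n k : nat) : nat :=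
  \max_(F : {set {set 'I_l * 'I_n}} | good_family k F) #|F|.

From HB Require Import structures.
From mathcomp Require Import all_boot all_order all_algebra.
From mathcomp Require Import lra.
Import Order.TTheory GRing.Theory Num.Theory.
Set Implicit Arguments. Unset Strict Implicit. Unset Printing Implicit Defensive.

(* Deleting the block A_i from the members of a good family that contain a
   fixed point of A_i leaves a good family on l - 1 blocks: those members still
   meet inside A_i, so A_i never counts among the blocks where two of them are
   disjoint, and distinct members stay distinct since two equal balanced sets
   are disjoint in no block, an even number.  So every point lies in at most
   f_{l-1} members.  Double counting the incidences with the n points of A_1
   gives (a).  For even l, distinct members are disjoint in an odd number of
   blocks, hence in fewer than l, so they intersect: every member other than a
   fixed S0 contains one of the k l points of S0, each of which lies in at most
   f_{l-1} - 1 further members, which gives (b). *)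

Lemma leq_card_bigcup (I T : finType) (P : pred I) (G : I -> {set T}) :
  #|\bigcup_(i | P i) G i| <= \sum_(i | P i) #|G i|.
Proof.
elim/big_rec2: _ => [|i B s _ IH]; first by rewrite cards0.
by rewrite (leq_trans (leq_card_setU _ _)) // leq_add2l.
Qed.

Definition star (T : finType) (F : {set {set T}}) (y : T) : {set {set T}} :=
  [set S in F | y \in S].

Lemma sum_card_setI_star (T : finType) (F : {set {set T}}) (X : {set T}) :
  \sum_(S in F) #|S :&: X| = \sum_(y in X) #|star F y|.
Proof.
have card_in (U : finType) (A B : {set U}) : #|A :&: B| = \sum_(u in B) (u \in A).
  rewrite -sum1_card big_mkcond [RHS]big_mkcond; apply: eq_bigr => u _.
  by rewrite inE; case: (u \in A); case: (u \in B).
under eq_bigr => S _ do rewrite card_in.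
rewrite exchange_big; apply: eq_bigr => y _.
by rewrite /star setIdE setIC card_in; apply: eq_bigr => S _; rewrite inE.
Qed.

Section Blocks.

Variables n k : nat.

Lemma card_setI_block l (S : {set 'I_l * 'I_n}) j :
  #|S :&: block n j| = #|[set x | (j, x) \in S]|.
Proof.
have inj : injective (fun x : 'I_n => (j, x)) by move=> a b [].
rewrite -(card_imset _ inj); apply: eq_card => -[a b].
rewrite !inE /=; apply/andP/imsetP.
- by case=> Sab /eqP aj; subst a; exists b; rewrite ?inE.
- by case=> c; rewrite inE => Sjc [-> ->].
Qed.

Lemma card_block l (i : 'I_l) : #|block n i| = n.
Proof.
rewrite -[block n i]setTI card_setI_block.
by rewrite (eq_card (B := 'I_n)) ?card_ord // => x; rewrite !inE.
Qed.

Lemma card_balanced l (S : {set 'I_l * 'I_n}) : balanced k S -> #|S| = l * k.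
Proof.
move/forallP=> bS.
have -> : #|S| = \sum_(i < l) #|S :&: block n i|.
  have coverS : \bigcup_(i < l) (S :&: block n i) = S.
    apply/setP=> x; apply/bigcupP/idP => [[i _ /setIP[]] // | Sx].
    by exists x.1; rewrite // !inE Sx /=.
  have disj i j : i != j -> [disjoint S :&: block n i & S :&: block n j].
    move=> neq_ij; rewrite -setI_eq0; apply/eqP/setP=> x; rewrite !inE.
    apply/negP=> /andP[/andP[_ /eqP xi] /andP[_ /eqP xj]].
    by rewrite -xi xj eqxx in neq_ij.
  rewrite -[in LHS]coverS -sum1_card (partition_disjoint_bigcup _ _ disj).
  by apply: eq_bigr => i _; rewrite sum1_card.
by rewrite (eq_bigr (fun _ => k)) => [|i _]; [rewrite sum_nat_const card_ord | exact/eqP].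
Qed.

Lemma balanced_first_k l : k <= n -> balanced k [set y : 'I_l * 'I_n | y.2 < k].
Proof.
move=> le_kn; apply/forallP => j; rewrite card_setI_block.
have -> : [set x | (j, x) \in [set y : 'I_l * 'I_n | y.2 < k]] =
          [set widen_ord le_kn z | z : 'I_k].
  apply/setP => x; rewrite !inE /=; apply/idP/imsetP => [xk | [z _ ->]].
    by exists (Ordinal xk) => //; apply: val_inj.
  by rewrite /= ltn_ord.
by rewrite card_imset ?card_ord // => a b /(congr1 val) /= /val_inj.
Qed.

Lemma ndisj_balanced_self l (S : {set 'I_l * 'I_n}) :
  0 < k -> balanced k S -> ndisj S S = 0.
Proof.
move=> k_gt0 /forallP bS; apply/eqP; rewrite cards_eq0; apply/eqP/setP => j.
by rewrite !inE setIid -cards_eq0 (eqP (bS j)) eqn0Ngt k_gt0.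
Qed.

Lemma good_family_meet l (F : {set {set 'I_l * 'I_n}}) S T :
  ~~ odd l -> good_family k F -> S \in F -> T \in F -> S != T ->
  exists y, (y \in S) && (y \in T).
Proof.
move=> even_l /andP[_ /forall_inP oddF] SF TF neq_ST.
have odd_ST := implyP (forall_inP (oddF S SF) T TF) neq_ST.
have [/existsP // | /existsPn noy] := boolP [exists y, (y \in S) && (y \in T)].
suff all_disj : [set i | S :&: T :&: block n i == set0] = setT.
  by move: odd_ST; rewrite /ndisj all_disj cardsT card_ord (negbTE even_l).
apply/setP => i; rewrite !inE; apply/set0Pn => -[y].
by rewrite !inE => /andP[/andP[Sy Ty] _]; have := noy y; rewrite Sy Ty.
Qed.

Definition drop_block l (i : 'I_l.+1) (S : {set 'I_l.+1 * 'I_n}) : {set 'I_l * 'I_n} :=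
  [set y | (lift i y.1, y.2) \in S].

Lemma drop_block_balanced l i (S : {set 'I_l.+1 * 'I_n}) :
  balanced k S -> balanced k (drop_block i S).
Proof.
move/forallP=> bS; apply/forallP=> j; rewrite -(eqP (bS (lift i j))).
by rewrite !card_setI_block; apply/eqP/eq_card => x; rewrite !inE.
Qed.

Lemma ndisj_drop_block l i (x : 'I_n) (S T : {set 'I_l.+1 * 'I_n}) :
  (i, x) \in S -> (i, x) \in T -> ndisj (drop_block i S) (drop_block i T) = ndisj S T.
Proof.
move=> Six Tix; rewrite /ndisj -(card_imset _ (@lift_inj _ i)); apply: eq_card => j.
have disj_drop j' : (drop_block i S :&: drop_block i T :&: block n j' == set0) =
                    (S :&: T :&: block n (lift i j') == set0).
  rewrite -!cards_eq0 !card_setI_block; congr (_ == 0).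
  by apply/eq_card => z; rewrite !inE.
have meet_i : (S :&: T :&: block n i == set0) = false.
  by apply/negbTE/set0Pn; exists (i, x); rewrite !inE Six Tix /=.
rewrite inE; case: (unliftP i j) => [j'|] ->.
  by rewrite mem_imset ?inE ?disj_drop //; exact: lift_inj.
by rewrite meet_i; apply/negbTE/imsetP => -[j' _ /eqP]; rewrite (negbTE (neq_lift _ _)).
Qed.

End Blocks.

Section MaximumFamilies.

Variables n k : nat.
Hypothesis k_gt0 : 0 < k.

Lemma leq_card_f l (F : {set {set 'I_l * 'I_n}}) : good_family k F -> #|F| <= f l n k.
Proof. exact: leq_bigmax_cond. Qed.

Lemma f_attained l : exists2 F : {set {set 'I_l * 'I_n}}, good_family k F & f l n k = #|F|.
Proof.
have good_exists : 0 < #|[pred F : {set {set 'I_l * 'I_n}} | good_family k F]|.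
  apply/card_gt0P; exists set0; rewrite inE.
  by apply/andP; split; apply/forall_inP => ?; rewrite inE.
have [F goodF max_F] :=
  eq_bigmax_cond (fun F : {set {set 'I_l * 'I_n}} => #|F|) good_exists.
by exists F; [rewrite inE in goodF | exact: max_F].
Qed.

Lemma f_gt0 l : k <= n -> 0 < f l n k.
Proof.
move=> le_kn; set S := [set y : 'I_l * 'I_n | y.2 < k].
suff /leq_card_f : good_family k [set S] by rewrite cards1.
apply/andP; split; apply/forall_inP => S'; rewrite inE => /eqP ->.
  exact: balanced_first_k.
by apply/forall_inP => T; rewrite inE => /eqP ->; rewrite eqxx.
Qed.

Lemma card_star_le_f l (F : {set {set 'I_l.+1 * 'I_n}}) y :
  good_family k F -> #|star F y| <= f l n k.
Proof.
case: y => i x /andP[/forall_inP balF /forall_inP oddF].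
have star_inv S : S \in star F (i, x) -> S \in F /\ (i, x) \in S.
  by rewrite inE => /andP[].
have inj_drop : {in star F (i, x) &, injective (drop_block i)}.
  move=> S T /star_inv[SF Six] /star_inv[TF Tix] eq_drop.
  apply/eqP/negPn/negP => neq_ST.
  have := implyP (forall_inP (oddF S SF) T TF) neq_ST.
  have balT := drop_block_balanced i (balF T TF).
  by rewrite -(ndisj_drop_block Six Tix) eq_drop (ndisj_balanced_self k_gt0 balT).
rewrite -(card_in_imset inj_drop); apply: leq_card_f; apply/andP; split.
  by apply/forall_inP => _ /imsetP[S /star_inv[SF _] ->]; exact/drop_block_balanced/balF.
apply/forall_inP => _ /imsetP[S /star_inv[SF Six] ->].
apply/forall_inP => _ /imsetP[T /star_inv[TF Tix] ->].
apply/implyP => neq_drop; rewrite (ndisj_drop_block Six Tix).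
by apply: (implyP (forall_inP (oddF S SF) T TF)); apply: contraNneq neq_drop => ->.
Qed.

Lemma double_count_good_family l (F : {set {set 'I_l.+1 * 'I_n}}) :
  good_family k F -> k * #|F| <= n * f l n k.
Proof.
move=> goodF; have /andP[/forall_inP balF _] := goodF.
have -> : k * #|F| = \sum_(y in block n ord0) #|star F y|.
  rewrite -sum_card_setI_star mulnC -sum_nat_const.
  by apply/eq_bigr => S SF; rewrite (eqP (forallP (balF S SF) ord0)).
rewrite -[in X in (_ <= X * _)](card_block n (ord0 : 'I_l.+1)) -sum_nat_const.
by apply: leq_sum => y _; exact: card_star_le_f.
Qed.

Lemma card_good_family_even l (F : {set {set 'I_l.+1 * 'I_n}}) :
  ~~ odd l.+1 -> good_family k F -> #|F| <= 1 + k * l.+1 * (f l n k - 1).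
Proof.
move=> even_l goodF; have /andP[/forall_inP balF _] := goodF.
have [->|[S0 S0F]] := set_0Vmem F; first by rewrite cards0.
have cover : F :\ S0 \subset \bigcup_(y in S0) (star F y :\ S0).
  apply/subsetP => T /setD1P[neq_TS0 TF].
  have [y /andP[S0y Ty]] : exists y, (y \in S0) && (y \in T).
    by apply: (good_family_meet even_l goodF S0F TF); rewrite eq_sym.
  by apply/bigcupP; exists y; rewrite // !inE neq_TS0 TF.
rewrite (cardsD1 S0 F) S0F add1n ltnS [k * _]mulnC -(card_balanced (balF S0 S0F)).
apply: (leq_trans (subset_leq_card cover)); apply: (leq_trans (leq_card_bigcup _ _)).
rewrite -sum_nat_const; apply: leq_sum => y S0y.
have S0_star : S0 \in star F y by rewrite inE S0F S0y.
have := card_star_le_f y goodF; rewrite (cardsD1 S0 (star F y)) S0_star => le_star.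
by rewrite leq_subRL // (leq_trans _ le_star).
Qed.

End MaximumFamilies.

Local Open Scope ring_scope.

Theorem mainTheorem12 (l k n : nat) :
  (2 <= l)%N -> (1 <= k)%N -> (1 <= n)%N ->
  ((f l n k)%:R <= (n%:R / k%:R) * (f l.-1 n k)%:R :> rat) /\
  (~~ odd l -> (k <= n)%N ->
     ((f l n k)%:R <= 1 + (k * l)%:R * ((f l.-1 n k)%:R - 1) :> rat) /\
     (1 + (k * l)%:R * ((f l.-1 n k)%:R - 1) <= (k * l)%:R * (f l.-1 n k)%:R :> rat)).
Proof.
move=> l_ge2 k_gt0 _; case: l l_ge2 => [|l] // _ /=.
have [F goodF ->] := f_attained n k l.+1.
split.
  rewrite mulrAC ler_pdivlMr ?ltr0n // -!natrM ler_nat mulnC.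
  exact: double_count_good_family.
move=> even_l le_kn; have f_pos := f_gt0 l le_kn.
split.
  have := card_good_family_even k_gt0 even_l goodF.
  by rewrite -(ler_nat rat) natrD natrM natrB.
have : 1 <= (k * l.+1)%:R :> rat by rewrite ler1n muln_gt0 k_gt0.
lra.
Qed.
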